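(* (i) For all integers $j\geq 3$, $R_1^{\mathcal{BIP}}(3,j)=j$. (ii) For all integers $i\geq 5$ and $j\geq 3$, $R_1^{\mathcal{BIP}}(i,j)=2j-1$. Here $\mathcal{BIP}$ is the class of bipartite graphs.
   Context: All graphs are finite and simple. For a graph $G$ and a nonnegative integer $k$, a $k$-sparse $j$-set is a set of $j$ vertices of $G$ inducing a subgraph of maximum degree at most $k$; a $k$-dense $i$-set is a set of $i$ vertices of $G$ that is $k$-sparse in the complement of $G$. For a graph class $\mathcal{G}$, $R_k^{\mathcal{G}}(i,j)$ is the smallest natural number $n$ such that every graph on $n$ vertices in $\mathcal{G}$ has either a $k$-dense $i$-set or a $k$-sparse $j$-set. *)

From mathcomp Require Import all_boot.
Set Implicit Arguments. Unset Strict Implicit. Unset Printing Implicit Defensive.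

Definition simple_graph (n : nat) (e : rel 'I_n) : Prop :=
  symmetric e /\ irreflexive e.

Definition graph_class := forall n : nat, rel 'I_n -> Prop.

Definition bipartite : graph_class :=
  fun n e => exists c : 'I_n -> bool, forall x y, e x y -> c x != c y.

Definition k_sparse (n : nat) (e : rel 'I_n) (k : nat) (S : {set 'I_n}) : Prop :=
  forall x, x \in S -> #|[set y in S | e x y]| <= k.

Definition compl_rel (n : nat) (e : rel 'I_n) : rel 'I_n :=
  fun x y => (x != y) && ~~ e x y.

Definition k_dense (n : nat) (e : rel 'I_n) (k : nat) (S : {set 'I_n}) : Prop :=
  k_sparse (compl_rel e) k S.

Definition ramsey_prop (G : graph_class) (k i j n : nat) : Prop :=
  forall e : rel 'I_n, simple_graph e -> G n e ->
    (exists S : {set 'I_n}, #|S| = i /\ k_dense e k S) \/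
    (exists S : {set 'I_n}, #|S| = j /\ k_sparse e k S).

Definition is_ramsey_number (G : graph_class) (k i j r : nat) : Prop :=
  ramsey_prop G k i j r /\ forall m, m < r -> ~ ramsey_prop G k i j m.

From mathcomp Require Import all_boot zify.

Set Implicit Arguments.
Unset Strict Implicit.
Unset Printing Implicit Defensive.

(** A 1-dense set of a bipartite graph meets each colour class, an independent
    set, in at most two vertices, so it has at most four vertices.  Hence for
    [i >= 5] only sparse sets matter: a bipartite graph on [2j - 1] vertices has
    a colour class with [j] vertices, while a balanced complete bipartite graph
    on fewer vertices has sides of size at most [j - 1] and every 1-sparse set
    meeting both sides has at most two vertices.  For [i = 3], a vertex with two
    neighbours spans a 1-dense 3-set, and the empty graph on fewer than [j]
    vertices has no 1-dense 3-set. *)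

Definition independent n (e : rel 'I_n) (S : {set 'I_n}) : Prop :=
  {in S &, forall x y, ~~ e x y}.

Lemma exists_subset_card (T : finType) (A : {set T}) k :
  k <= #|A| -> exists S : {set T}, #|S| = k /\ S \subset A.
Proof.
move=> leA.
have : 0 < #|[set S : {set T} | S \subset A & #|S| == k]|.
  by rewrite cards_draws bin_gt0.
by case/card_gt0P => S; rewrite inE => /andP [SA /eqP Sk]; exists S.
Qed.

Lemma card_ord_bounded m (S : {set 'I_m}) a b :
  (forall x, x \in S -> a <= x < b) -> #|S| <= b - a.
Proof.
move=> Sab; rewrite cardE -(size_map val) -(size_iota a (b - a)).
apply: uniq_leq_size; first by rewrite (map_inj_uniq val_inj) enum_uniq.
move=> _ /mapP [x /[!mem_enum] /Sab /andP [ax xb] ->].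
by rewrite mem_iota ax subnKC ?xb // (leq_trans ax (ltnW xb)).
Qed.

Lemma k_sparse_subset n (e : rel 'I_n) k (S T : {set 'I_n}) :
  S \subset T -> k_sparse e k T -> k_sparse e k S.
Proof.
move=> ST spT x xS; apply: leq_trans (spT x (subsetP ST x xS)).
apply/subset_leq_card/subsetP => y; rewrite !inE => /andP [yS ->].
by rewrite (subsetP ST y yS).
Qed.

Section VertexSets.

Variables (n : nat) (e : rel 'I_n).

Lemma bipartite_irreflexive : bipartite e -> irreflexive e.
Proof. by move=> [c ce] x; apply/negP => /ce; rewrite eqxx. Qed.

Lemma independent_subset (S T : {set 'I_n}) :
  S \subset T -> independent e T -> independent e S.
Proof. by move=> /subsetP ST indT x y /ST xT /ST; apply: indT. Qed.

Lemma independent_k_sparse k (S : {set 'I_n}) : independent e S -> k_sparse e k S.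
Proof.
move=> indS x xS; rewrite (_ : [set y in S | e x y] = set0) ?cards0 //.
by apply/setP => y; rewrite !inE; apply/andP => -[yS]; apply/negP/indS.
Qed.

Lemma card_compl_nbhd (S : {set 'I_n}) x : irreflexive e -> x \in S ->
  #|[set y in S | compl_rel e x y]| = #|S :\ x| - #|[set y in S | e x y]|.
Proof.
move=> irr xS.
have -> : [set y in S | compl_rel e x y] = (S :\ x) :\: [set y in S | e x y].
  apply/setP => y; rewrite !inE /compl_rel eq_sym.
  by case: (y \in S); case: (e x y); rewrite ?andbF ?andbT.
rewrite cardsD (setIidPr _) //; apply/subsetP => y; rewrite !inE.
by case/andP => -> exy; rewrite andbT; apply: contraTneq exy => ->; rewrite irr.
Qed.

Lemma k_dense_of_no_isolated (S : {set 'I_n}) : irreflexive e ->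
  {in S, forall x, exists2 y, y \in S & e x y} -> k_dense e (#|S| - 2) S.
Proof.
move=> irr nbS x xS; rewrite card_compl_nbhd // [#|S|](cardsD1 x) xS.
have [y yS exy] := nbS x xS.
have : 0 < #|[set y in S | e x y]| by apply/card_gt0P; exists y; rewrite inE yS.
lia.
Qed.

Lemma independent_k_dense_card k (S : {set 'I_n}) : irreflexive e ->
  independent e S -> k_dense e k S -> #|S| <= k.+1.
Proof.
move=> irr indS dS; have [-> | [x xS]] := set_0Vmem S; first by rewrite cards0.
have := dS x xS; rewrite card_compl_nbhd // [#|S|](cardsD1 x) xS.
by rewrite (_ : [set y in S | e x y] = set0) ?cards0 ?subn0 //; apply/setP => y;
  rewrite !inE; apply/andP => -[yS]; apply/negP/indS.
Qed.

Lemma bipartite_k_dense_card k (S : {set 'I_n}) :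
  bipartite e -> k_dense e k S -> #|S| <= 2 * k.+1.
Proof.
move=> bip dS; have irr := bipartite_irreflexive bip; have [c ce] := bip.
have class_card b : #|S :&: [set x | c x == b]| <= k.+1.
  apply: independent_k_dense_card => //; last first.
    by apply: k_sparse_subset dS; apply: subsetIl.
  move=> x y; rewrite !inE => /andP [_ /eqP cx] /andP [_ /eqP cy].
  by apply: contraTN isT => /ce; rewrite cx cy eqxx.
rewrite -(cardsID [set x | c x == true] S) mul2n -addnn leq_add //.
have -> : S :\: [set x | c x == true] = S :&: [set x | c x == false].
  by apply/setP => x; rewrite !inE; case: (c x); rewrite ?andbT ?andbF.
exact: class_card.
Qed.

Lemma bipartite_independent_half : bipartite e ->
  exists A : {set 'I_n}, n <= 2 * #|A| /\ independent e A.
Proof.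
move=> [c ce].
have class_indep b : independent e [set x | c x == b].
  move=> x y /[!inE] /eqP cx /eqP cy; apply/negP => /ce.
  by rewrite cx cy eqxx.
have := cardsC [set x | c x == true]; rewrite card_ord.
have -> : ~: [set x | c x == true] = [set x | c x == false].
  by apply/setP => x; rewrite !inE; case: (c x).
set A1 := [set x | c x == true]; set A0 := [set x | c x == false] => sum_cl.
case: (leqP #|A0| #|A1|) => le_cl.
- exists A1; split; last exact: class_indep.
  by rewrite mul2n -addnn -[X in X <= _]sum_cl leq_add2l.
- exists A0; split; last exact: class_indep.
  by rewrite mul2n -addnn -[X in X <= _]sum_cl leq_add2r ltnW.
Qed.

End VertexSets.

Lemma ramsey_prop_1_3_diag (G : graph_class) n : ramsey_prop G 1 3 n n.
Proof.
move=> e [sym irr] _.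
case: (boolP [forall x, #|[set y in [set: 'I_n] | e x y]| <= 1]) => [/forallP sp | ].
  by right; exists setT; rewrite cardsT card_ord; split => // x _; apply: sp.
case/forallPn => x; rewrite -ltnNge => /card_gt1P [y [z [exy exz yz]]].
rewrite !inE /= in exy exz.
have xy : x != y by apply: contraTneq exy => <-; rewrite irr.
have xz : x != z by apply: contraTneq exz => <-; rewrite irr.
have card3 : #|[set x; y; z]| = 3.
  by rewrite setUC cardsU1 cards2 xy !inE negb_or ![z == _]eq_sym xz yz.
left; exists [set x; y; z]; split => //; rewrite -[1]/(3 - 2) -card3.
apply: k_dense_of_no_isolated => // w /[!inE] /orP [/orP [] | ] /eqP ->.
- by exists y; rewrite ?inE ?eqxx ?orbT.
- by exists x; rewrite ?inE ?eqxx // sym.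
- by exists x; rewrite ?inE ?eqxx // sym.
Qed.

Lemma not_ramsey_prop_1_3 j m : m < j -> ~ ramsey_prop bipartite 1 3 j m.
Proof.
move=> mj /(_ (fun _ _ => false)) [] //; first by exists (fun _ => true).
- case=> S [S3 dS]; suff : #|S| <= 2 by rewrite S3.
  by apply: independent_k_dense_card dS.
- by case=> S [Sj _]; move: (max_card S); rewrite card_ord; lia.
Qed.

Definition complete_bipartite m h : rel 'I_m := fun x y => (x < h) != (y < h).

Lemma complete_bipartite_simple m h : simple_graph (@complete_bipartite m h).
Proof. by split=> [x y | x]; rewrite /complete_bipartite ?eqxx // eq_sym. Qed.

Lemma complete_bipartite_bipartite m h : bipartite (@complete_bipartite m h).
Proof. by exists (fun x => x < h). Qed.

Lemma complete_bipartite_k_sparse_card m h k (S : {set 'I_m}) :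
  k_sparse (complete_bipartite h) k S -> #|S| <= maxn (2 * k) (maxn h (m - h)).
Proof.
move=> spS; set A := [set x in S | x < h]; set B := [set x in S | ~~ (x < h)].
have cardS : #|S| = #|A| + #|B|.
  rewrite -(cardsID [set x : 'I_m | x < h] S).
  by congr (_ + _); apply: eq_card => x; rewrite !inE // andbC.
have cardA : #|A| <= h.
  by rewrite -[h]subn0; apply: card_ord_bounded => x; rewrite inE => /andP [].
have cardB : #|B| <= m - h.
  by apply: card_ord_bounded => x; rewrite inE ltn_ord andbT -leqNgt => /andP [].
have [A0 | [x /[!inE] /andP [xS xh]]] := set_0Vmem A.
  by move: cardS; rewrite A0 cards0; lia.
have [B0 | [y /[!inE] /andP [yS /negbTE yh]]] := set_0Vmem B.
  by move: cardS; rewrite B0 cards0; lia.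
have cardBk : #|B| <= k.
  apply: leq_trans (spS x xS); apply/subset_leq_card/subsetP => z.
  by rewrite !inE /complete_bipartite xh => /andP [-> ->].
have cardAk : #|A| <= k.
  apply: leq_trans (spS y yS); apply/subset_leq_card/subsetP => z.
  by rewrite !inE /complete_bipartite yh => /andP [-> ->].
lia.
Qed.

Lemma ramsey_prop_bipartite_upper k i j : ramsey_prop bipartite k i j (2 * j - 1).
Proof.
move=> e _ bip; right.
have [A [cardA indA]] := bipartite_independent_half bip.
have [S [cardS SA]] : exists S : {set 'I_(2 * j - 1)}, #|S| = j /\ S \subset A.
  by apply: exists_subset_card; lia.
by exists S; split => //; apply/independent_k_sparse/(independent_subset SA).
Qed.

Lemma not_ramsey_prop_bipartite i j m :
  5 <= i -> 3 <= j -> m < 2 * j - 1 -> ~ ramsey_prop bipartite 1 i j m.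
Proof.
move=> hi hj hm /(_ (complete_bipartite m./2)) [].
- exact: complete_bipartite_simple.
- exact: complete_bipartite_bipartite.
- case=> S [cardS /bipartite_k_dense_card]; rewrite cardS.
  by move=> /(_ (complete_bipartite_bipartite _ _)); lia.
- case=> S [cardS /complete_bipartite_k_sparse_card]; rewrite cardS => card_le.
  by move: hj hm card_le; clear; lia.
Qed.

Theorem theorem5p2 :
  (forall j : nat, 3 <= j -> is_ramsey_number bipartite 1 3 j j) /\
  (forall i j : nat, 5 <= i -> 3 <= j -> is_ramsey_number bipartite 1 i j (2 * j - 1)).
Proof.
split=> [j _ | i j hi hj]; split.
- exact: ramsey_prop_1_3_diag.
- by move=> m; apply: not_ramsey_prop_1_3.
- exact: ramsey_prop_bipartite_upper.
- by move=> m; apply: not_ramsey_prop_bipartite.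
Qed.
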